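(* For every integer $n\ge1$ and every $\eta>0$, $$\sup_{0\ne f\in\mathcal{T}_n(\eta)}\frac{|f'(0)|}{\|f\|_{L_2[0,1]}} \ge (1+\varepsilon_n)\,3^{-1/2}\,n^3,$$ where $1+\varepsilon_n := 3^{1/2}n^{-3}\left(\sum_{k=0}^{n-1}k^2(k+1)^2(2k+1)\right)^{1/2}$ (so $\varepsilon_n\to0$ as $n\to\infty$).
   Context: For $\eta>0$, $\mathcal{T}_n(\eta)$ denotes the set of all functions $f(t)=\sum_{j=1}^na_je^{i\lambda_jt}$ with $a_j\in\mathbb{C}$ and real $0<\lambda_1<\lambda_2<\cdots<\lambda_n<\eta$. $\|f\|_{L_2[0,1]}=(\int_0^1|f|^2)^{1/2}$. *)

From Stdlib Require Import Reals.
Open Scope R_scope.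

Fixpoint rsum (n : nat) (g : nat -> R) : R :=
  match n with
  | O => 0
  | S k => rsum k g + g k
  end.

(* Frequencies lam 0 < ... < lam (n-1), with 0 < lam 0 and lam (n-1) < eta
   (paper's lambda_1 .. lambda_n, re-indexed from 0). *)
Definition freqs_ok (n : nat) (eta : R) (lam : nat -> R) : Prop :=
  (forall j, (j < n)%nat -> 0 < lam j /\ lam j < eta) /\
  (forall j, (S j < n)%nat -> lam j < lam (S j)).

(* f(t) = sum_j (a j + i b j) e^{i lam_j t}:
   real part and imaginary part. *)
Definition fRe (n : nat) (a b lam : nat -> R) (t : R) : R :=
  rsum n (fun j => a j * cos (lam j * t) - b j * sin (lam j * t)).
Definition fIm (n : nat) (a b lam : nat -> R) (t : R) : R :=
  rsum n (fun j => a j * sin (lam j * t) + b j * cos (lam j * t)).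

Definition fAbs2 (n : nat) (a b lam : nat -> R) (t : R) : R :=
  fRe n a b lam t ^ 2 + fIm n a b lam t ^ 2.

Definition eps_n (n : nat) : R :=
  sqrt 3 * / (INR n ^ 3) *
  sqrt (rsum n (fun k => INR k ^ 2 * (INR k + 1) ^ 2 * (2 * INR k + 1))) - 1.

From Stdlib Require Import Reals Lra Lia Classical.
From Coquelicot Require Import Coquelicot.
Open Scope R_scope.

(* Let [p] be the polynomial of degree [< n] that is orthogonal in [L2[0,1]] to
   every [x^m], [m < n], except [m = 1].  Its coefficients are explicit, and its
   moments are alternating binomial sums of polynomials of degree [n], which
   vanish; this gives [int p^2 = p'(0) * int x p] and [p'(0)^2 / int p^2 =
   eps_sum n], the square of the claimed bound.  For small [d > 0] the exponential
   sum [f(t) = e^(i d t) p((e^(i d t) - 1) / (i d))] has frequencies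
   [d, 2d, ..., nd], satisfies [|f(t)| = |p(t)| + O(d)] on [[0,1]] because
   [(e^(i d t) - 1) / (i d) = t + O(d)], and [Re f'(0) = p'(0)]; letting [d -> 0]
   brings [|f'(0)| / ||f||] as close to the bound as we like.  For [n = 1] the
   bound is [0]. *)

Lemma rsum_ext (k : nat) (g h : nat -> R) :
  (forall j, (j < k)%nat -> g j = h j) -> rsum k g = rsum k h.
Proof.
  revert g h; induction k as [|k IH]; intros g h E; simpl; auto.
  rewrite (IH g h) by (intros; apply E; lia); rewrite E by lia; reflexivity.
Qed.

Lemma rsum_add (k : nat) (g h : nat -> R) :
  rsum k (fun j => g j + h j) = rsum k g + rsum k h.
Proof. induction k as [|k IH]; simpl; [lra | rewrite IH; lra]. Qed.

Lemma rsum_scal (k : nat) (c : R) (g : nat -> R) :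
  rsum k (fun j => c * g j) = c * rsum k g.
Proof. induction k as [|k IH]; simpl; [lra | rewrite IH; lra]. Qed.

Lemma rsum_Sl (k : nat) (g : nat -> R) :
  rsum (S k) g = g O + rsum k (fun j => g (S j)).
Proof. revert g; induction k as [|k IH]; intros g; simpl in *; [lra | rewrite IH; lra]. Qed.

Lemma rsum_eq0 (k : nat) (g : nat -> R) :
  (forall j, (j < k)%nat -> g j = 0) -> rsum k g = 0.
Proof.
  induction k as [|k IH]; intros E; simpl; [lra|].
  rewrite IH by (intros; apply E; lia); rewrite E by lia; lra.
Qed.

Lemma rsum_single (k i : nat) (g : nat -> R) : (i < k)%nat ->
  (forall j, (j < k)%nat -> j <> i -> g j = 0) -> rsum k g = g i.
Proof.
  induction k as [|k IH]; intros Hi E; [lia|]; simpl.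
  destruct (Nat.eq_dec i k) as [->|Hik].
  - rewrite rsum_eq0 by (intros; apply E; lia); lra.
  - rewrite IH, (E k); try lra; try lia; intros; apply E; lia.
Qed.

Fixpoint rprod (k : nat) (g : nat -> R) : R :=
  match k with O => 1 | S k' => rprod k' g * g k' end.

Lemma rprod_ext (k : nat) (g h : nat -> R) :
  (forall j, (j < k)%nat -> g j = h j) -> rprod k g = rprod k h.
Proof.
  revert g h; induction k as [|k IH]; intros g h E; simpl; auto.
  rewrite (IH g h) by (intros; apply E; lia); rewrite E by lia; reflexivity.
Qed.

Lemma rprod_Sl (k : nat) (g : nat -> R) :
  rprod (S k) g = g O * rprod k (fun j => g (S j)).
Proof. revert g; induction k as [|k IH]; intros g; simpl in *; [lra | rewrite IH; lra]. Qed.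

Lemma rprod_add (k l : nat) (g : nat -> R) :
  rprod (k + l) g = rprod k g * rprod l (fun j => g (k + j)%nat).
Proof.
  induction l as [|l IH]; simpl; [rewrite Nat.add_0_r; lra|].
  rewrite Nat.add_succ_r; simpl; rewrite IH; lra.
Qed.

Lemma rprod_pos (k : nat) (g : nat -> R) :
  (forall j, (j < k)%nat -> 0 < g j) -> 0 < rprod k g.
Proof.
  induction k as [|k IH]; intros H; simpl; [lra|].
  apply Rmult_lt_0_compat; [apply IH; intros; apply H | apply H]; lia.
Qed.

(** * Finite differences and alternating binomial sums *)

(* [deg_lt k Q]: the k-th finite difference of Q vanishes, i.e. Q agrees on
   nat with a polynomial of degree < k. *)
Definition fdiff (Q : nat -> R) (i : nat) : R := Q (S i) - Q i.

Fixpoint deg_lt (k : nat) (Q : nat -> R) : Prop :=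
  match k with O => forall i, Q i = 0 | S k' => deg_lt k' (fdiff Q) end.

Lemma deg_lt_ext (k : nat) (Q Q' : nat -> R) :
  (forall i, Q i = Q' i) -> deg_lt k Q -> deg_lt k Q'.
Proof.
  revert Q Q'; induction k as [|k IH]; simpl; intros Q Q' E H.
  - intros i; rewrite <- E; auto.
  - apply (IH (fdiff Q)); auto; intros i; unfold fdiff; rewrite !E; auto.
Qed.

Lemma deg_lt_add (k : nat) (P Q : nat -> R) :
  deg_lt k P -> deg_lt k Q -> deg_lt k (fun i => P i + Q i).
Proof.
  revert P Q; induction k as [|k IH]; simpl; intros P Q HP HQ.
  - intros i; rewrite HP, HQ; lra.
  - apply (deg_lt_ext _ (fun i => fdiff P i + fdiff Q i)); [intros; unfold fdiff; lra|].
    apply IH; auto.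
Qed.

Lemma deg_lt_shift (k : nat) (Q : nat -> R) : deg_lt k Q -> deg_lt k (fun i => Q (S i)).
Proof. revert Q; induction k as [|k IH]; simpl; intros Q H; auto; exact (IH (fdiff Q) H). Qed.

Lemma deg_lt_mul_linear (k : nat) (a : R) (Q : nat -> R) :
  deg_lt k Q -> deg_lt (S k) (fun i => (INR i + a) * Q i).
Proof.
  revert Q; induction k as [|k IH]; intros Q H.
  - simpl in *; intros i; unfold fdiff; rewrite !H; lra.
  - change (deg_lt (S k) (fdiff (fun i => (INR i + a) * Q i))).
    apply (deg_lt_ext _ (fun i => (INR i + a) * fdiff Q i + Q (S i))).
    + intros i; unfold fdiff; rewrite S_INR; lra.
    + apply deg_lt_add; [apply IH; exact H | apply deg_lt_shift; exact H].
Qed.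

Lemma deg_lt_mul_rprod (k j : nat) (a : nat -> R) (Q : nat -> R) : deg_lt j Q ->
  deg_lt (j + k) (fun i => rprod k (fun l => INR i + a l) * Q i).
Proof.
  revert j Q; induction k as [|k IH]; intros j Q H.
  - rewrite Nat.add_0_r; apply (deg_lt_ext _ Q); auto; intros; simpl; lra.
  - rewrite Nat.add_succ_r, <- Nat.add_succ_l.
    apply (deg_lt_ext _ (fun i => rprod k (fun l => INR i + a l) * ((INR i + a k) * Q i))).
    + intros; simpl; lra.
    + apply IH, deg_lt_mul_linear, H.
Qed.

(* Pascal's triangle; unlike Stdlib's [C n k], it vanishes for [k > n]. *)
Fixpoint binom (k i : nat) : R :=
  match k, i with
  | O, O => 1 | O, S _ => 0 | S _, O => 1
  | S k', S i' => binom k' i' + binom k' (S i')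
  end.

Lemma binom_gt (k i : nat) : (k < i)%nat -> binom k i = 0.
Proof.
  revert i; induction k as [|k IH]; intros i H; destruct i; simpl; try lia; auto.
  rewrite !IH by lia; lra.
Qed.

Lemma binom_0 (k : nat) : binom k 0 = 1.
Proof. destruct k; reflexivity. Qed.

Lemma binom_1 (k : nat) : binom k 1 = INR k.
Proof. induction k as [|k IH]; [reflexivity|]; simpl binom; rewrite IH, binom_0, S_INR; ring. Qed.

Lemma binom_2 (k : nat) : binom k 2 = INR k * (INR k - 1) / 2.
Proof. induction k as [|k IH]; [simpl; field|]; simpl binom; rewrite IH, binom_1, S_INR; field. Qed.

Lemma binom_3 (k : nat) : binom k 3 = INR k * (INR k - 1) * (INR k - 2) / 6.
Proof. induction k as [|k IH]; [simpl; field|]; simpl binom; rewrite IH, binom_2, S_INR; field. Qed.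

Definition alt_binom_sum (k : nat) (Q : nat -> R) : R :=
  rsum (S k) (fun i => (-1) ^ i * binom k i * Q i).

Lemma alt_binom_sum_S (k : nat) (Q : nat -> R) :
  alt_binom_sum (S k) Q = - alt_binom_sum k (fdiff Q).
Proof.
  unfold alt_binom_sum; rewrite rsum_Sl; simpl binom at 1.
  transitivity (Q O + rsum (S k) (fun i => (-1) ^ S i * binom k (S i) * Q (S i))
      - rsum (S k) (fun i => (-1) ^ i * binom k i * Q (S i))).
  { rewrite (rsum_ext (S k) (fun i => (-1) ^ S i * binom (S k) (S i) * Q (S i))
       (fun i => (-1) ^ S i * binom k (S i) * Q (S i) + (-1) * ((-1) ^ i * binom k i * Q (S i))))
      by (intros; simpl; ring).
    rewrite rsum_add, rsum_scal; simpl pow; lra. }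
  transitivity (rsum (S k) (fun i => (-1) ^ i * binom k i * Q i)
      - rsum (S k) (fun i => (-1) ^ i * binom k i * Q (S i))).
  { assert (Top : rsum (S k) (fun i => (-1) ^ S i * binom k (S i) * Q (S i))
                 = rsum k (fun i => (-1) ^ S i * binom k (S i) * Q (S i)))
      by (simpl; rewrite binom_gt by lia; ring).
    rewrite Top, (rsum_Sl k (fun i => (-1) ^ i * binom k i * Q i)), binom_0; cbv beta.
    simpl pow; ring. }
  rewrite (rsum_ext (S k) (fun i => (-1) ^ i * binom k i * fdiff Q i)
     (fun i => (-1) * ((-1) ^ i * binom k i * Q i) + (-1) ^ i * binom k i * Q (S i)))
    by (intros; unfold fdiff; ring).
  rewrite rsum_add, rsum_scal; lra.
Qed.

Lemma alt_binom_sum_deg_lt (k : nat) (Q : nat -> R) : deg_lt k Q -> alt_binom_sum k Q = 0.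
Proof.
  revert Q; induction k as [|k IH]; intros Q H.
  - unfold alt_binom_sum; simpl in *; rewrite H; lra.
  - rewrite alt_binom_sum_S, IH; [lra | exact H].
Qed.

(** * The extremal polynomial *)

(* The coefficients of the extremal polynomial [p(x) = sum_j ext_coef n j x^j],
   chosen so that [int_0^1 x^m p(x) dx = 0] for every [m < n] except [m = 1]. *)
Definition ext_coef (n j : nat) : R :=
  (-1) ^ S (S j) * binom (S n) (S (S j)) * (INR j + 1) ^ 2
  * rprod (n - 1) (fun l => INR j + 2 + INR l).

Definition ext_moment (n m : nat) : R :=
  rsum n (fun j => ext_coef n j / (INR j + INR m + 1)).

(* [(i - 1) * prod_{-1 <= k <= n-2, k <> m-1} (i + k)]: a polynomial of degree n in
   [i], and multiplying it by the missing factor [i + m - 1] gives a numerator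
   independent of [m].  Hence [ext_coef n j / (j + m + 1)] is the [(j+2)]-th term
   of an alternating binomial sum of it. *)
Definition moment_poly (n m i : nat) : R :=
  (INR i - 1) * rprod m (fun l => INR i + (INR l - 1))
  * rprod (n - 1 - m) (fun l => INR i + (INR m + INR l)).

Lemma moment_poly_deg_lt (n m : nat) : (m < n)%nat -> deg_lt (S n) (moment_poly n m).
Proof.
  intros Hm.
  apply (deg_lt_ext _ (fun i => (INR i + -1) * (rprod m (fun l => INR i + (INR l - 1))
      * (rprod (n - 1 - m) (fun l => INR i + (INR m + INR l)) * 1))));
    [intros; unfold moment_poly; ring|].
  apply deg_lt_mul_linear.
  replace n with (1 + (n - 1 - m) + m)%nat at 1 by lia.
  apply deg_lt_mul_rprod, deg_lt_mul_rprod.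
  simpl; intros i; unfold fdiff; lra.
Qed.

Lemma moment_poly_mul (n m i : nat) : (m < n)%nat ->
  moment_poly n m i * (INR i + INR m - 1)
  = (INR i - 1) ^ 2 * rprod (n - 1) (fun l => INR i + INR l).
Proof.
  intros Hm; unfold moment_poly.
  assert (Full : (INR i - 1) * rprod (n - 1) (fun l => INR i + INR l)
                 = rprod n (fun l => INR i + (INR l - 1))).
  { replace n with (S (n - 1)) at 2 by lia.
    rewrite rprod_Sl; f_equal; [simpl; lra|].
    apply rprod_ext; intros; rewrite S_INR; lra. }
  replace ((INR i - 1) ^ 2 * rprod (n - 1) (fun l => INR i + INR l))
    with ((INR i - 1) * ((INR i - 1) * rprod (n - 1) (fun l => INR i + INR l))) by ring.
  rewrite Full.
  replace (rprod n (fun l => INR i + (INR l - 1)))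
    with (rprod (m + S (n - 1 - m)) (fun l => INR i + (INR l - 1))) by (f_equal; lia).
  rewrite rprod_add, rprod_Sl, Nat.add_0_r.
  rewrite (rprod_ext (n - 1 - m) (fun j => INR i + (INR (m + S j) - 1))
     (fun l => INR i + (INR m + INR l))) by (intros; rewrite plus_INR, S_INR; ring).
  ring.
Qed.

Lemma ext_coef_div (n m j : nat) : (m < n)%nat ->
  ext_coef n j / (INR j + INR m + 1)
  = (-1) ^ S (S j) * binom (S n) (S (S j)) * moment_poly n m (S (S j)).
Proof.
  intros Hm.
  assert (E : (INR j + 1) ^ 2 * rprod (n - 1) (fun l => INR j + 2 + INR l)
              = moment_poly n m (S (S j)) * (INR j + INR m + 1)).
  { replace (INR j + INR m + 1) with (INR (S (S j)) + INR m - 1) by (rewrite !S_INR; ring).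
    rewrite moment_poly_mul by exact Hm; rewrite !S_INR.
    f_equal; [ring | apply rprod_ext; intros; ring]. }
  unfold ext_coef; rewrite Rmult_assoc, E.
  field; pose proof (pos_INR j); pose proof (pos_INR m); lra.
Qed.

Lemma ext_moment_eq (n m : nat) : (m < n)%nat -> ext_moment n m = - moment_poly n m 0.
Proof.
  intros Hm.
  pose proof (alt_binom_sum_deg_lt _ _ (moment_poly_deg_lt n m Hm)) as Z.
  unfold alt_binom_sum in Z; rewrite !rsum_Sl in Z.
  assert (Q1 : moment_poly n m 1 = 0) by (unfold moment_poly; simpl INR; ring).
  rewrite Q1, binom_0 in Z.
  replace (rsum n (fun j => (-1) ^ S (S j) * binom (S n) (S (S j)) * moment_poly n m (S (S j))))
    with (ext_moment n m) in Z
    by (apply rsum_ext; intros j _; apply ext_coef_div, Hm).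
  simpl pow in Z; lra.
Qed.

Lemma ext_moment_vanish (n m : nat) : (2 <= n)%nat -> (m < n)%nat -> m <> 1%nat ->
  ext_moment n m = 0.
Proof.
  intros Hn Hm Hm1; rewrite ext_moment_eq by exact Hm; unfold moment_poly.
  destruct m as [|[|m]]; [|lia|].
  - replace (n - 1 - 0)%nat with (S (n - 2)) by lia; rewrite rprod_Sl; simpl INR; ring.
  - replace (S (S m)) with (2 + m)%nat at 1 by lia; rewrite rprod_add; simpl; ring.
Qed.

Lemma ext_moment_1 (n : nat) : (2 <= n)%nat ->
  ext_moment n 1 = - rprod (n - 2) (fun l => 1 + INR l).
Proof.
  intros Hn; rewrite ext_moment_eq by lia; unfold moment_poly.
  replace (n - 1 - 1)%nat with (n - 2)%nat by lia; simpl rprod at 1; simpl INR.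
  rewrite (rprod_ext (n - 2) (fun l => 0 + (1 + INR l)) (fun l => 1 + INR l)) by (intros; ring).
  ring.
Qed.

Lemma ext_moment_1_neg (n : nat) : (2 <= n)%nat -> ext_moment n 1 < 0.
Proof.
  intros Hn; rewrite ext_moment_1 by exact Hn.
  enough (0 < rprod (n - 2) (fun l => 1 + INR l)) by lra.
  apply rprod_pos; intros j _; pose proof (pos_INR j); lra.
Qed.

Definition eps_sum (n : nat) : R :=
  rsum n (fun k => INR k ^ 2 * (INR k + 1) ^ 2 * (2 * INR k + 1)).

Lemma eps_sum_closed (n : nat) : eps_sum n = (INR n ^ 2 - 1) ^ 2 * INR n ^ 2 / 3.
Proof.
  unfold eps_sum; induction n as [|n IH]; [simpl; field|].
  change (rsum (S n) ?g) with (rsum n g + g n); rewrite IH, S_INR; field.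
Qed.

Lemma eps_sum_pos (n : nat) : (2 <= n)%nat -> 0 < eps_sum n.
Proof.
  intros Hn; rewrite eps_sum_closed.
  assert (2 <= INR n) by (replace 2 with (INR 2) by (simpl; lra); apply le_INR, Hn).
  assert (0 < (INR n ^ 2 - 1) ^ 2) by (apply pow_lt; nra).
  assert (0 < INR n ^ 2) by (apply pow_lt; lra).
  apply Rmult_lt_0_compat; [nra | lra].
Qed.

Lemma rprod_from3 (k : nat) : 2 * rprod (S k) (fun l => 3 + INR l) =
  (INR k + 1) * (INR k + 2) * (INR k + 3) * rprod k (fun l => 1 + INR l).
Proof.
  induction k as [|k IH]; [simpl; ring|].
  change (rprod (S (S k)) ?g) with (rprod (S k) g * g (S k)).
  change (rprod (S k) (fun l => 1 + INR l)) with (rprod k (fun l => 1 + INR l) * (1 + INR k)).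
  rewrite <- Rmult_assoc, IH, S_INR; ring.
Qed.

Lemma ext_coef_1 (n : nat) : (2 <= n)%nat -> ext_coef n 1 = eps_sum n * ext_moment n 1.
Proof.
  intros Hn; rewrite ext_moment_1, eps_sum_closed by exact Hn; unfold ext_coef.
  destruct n as [|[|k]]; try lia.
  replace (S (S k) - 1)%nat with (S k) by lia; replace (S (S k) - 2)%nat with k by lia.
  rewrite binom_3.
  rewrite (rprod_ext (S k) (fun l => INR 1 + 2 + INR l) (fun l => 3 + INR l))
    by (intros; simpl; ring).
  replace (rprod (S k) (fun l => 3 + INR l)) with
    ((INR k + 1) * (INR k + 2) * (INR k + 3) * rprod k (fun l => 1 + INR l) / 2)
    by (rewrite <- rprod_from3; field).
  rewrite !S_INR; simpl INR; simpl pow; field.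
Qed.

Lemma is_RInt_pow (k : nat) : is_RInt (fun x => x ^ k) 0 1 (/ (INR k + 1)).
Proof.
  assert (Hk : INR k + 1 <> 0) by (pose proof (pos_INR k); lra).
  replace (/ (INR k + 1)) with (minus (1 ^ S k / (INR k + 1)) (0 ^ S k / (INR k + 1)))
    by (unfold minus, plus, opp; simpl; rewrite pow1; field; exact Hk).
  apply (is_RInt_derive (fun x => x ^ S k / (INR k + 1))).
  - intros x _; auto_derive; [auto | destruct k; simpl; field; exact Hk].
  - intros x _; apply (ex_derive_continuous (fun y => y ^ k)); auto_derive; auto.
Qed.

Lemma is_RInt_rsum (k : nat) (g : nat -> R -> R) (I : nat -> R) (a b : R) :
  (forall j, (j < k)%nat -> is_RInt (g j) a b (I j)) ->
  is_RInt (fun x => rsum k (fun j => g j x)) a b (rsum k I).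
Proof.
  induction k as [|k IH]; intros H; simpl.
  - assert (H0 := is_RInt_const (V := R_NormedModule) a b 0).
    replace (scal (b - a) (0 : R_NormedModule)) with 0 in H0
      by (unfold scal; simpl; unfold mult; simpl; ring).
    exact H0.
  - apply (is_RInt_plus (fun x => rsum k (fun j => g j x)) (g k));
      [apply IH; intros; apply H | apply H]; lia.
Qed.

Definition ext_poly (n : nat) (x : R) : R := rsum n (fun j => ext_coef n j * x ^ j).

Lemma is_RInt_ext_moment (n m : nat) :
  is_RInt (fun x => x ^ m * ext_poly n x) 0 1 (ext_moment n m).
Proof.
  apply (is_RInt_ext (fun x => rsum n (fun j => ext_coef n j * x ^ (j + m))));
    [intros x _; unfold ext_poly; rewrite <- rsum_scal; apply rsum_ext; intros;
     rewrite pow_add; ring|].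
  apply is_RInt_rsum; intros j _.
  replace (ext_coef n j / (INR j + INR m + 1)) with (ext_coef n j * / (INR (j + m) + 1))
    by (rewrite plus_INR; reflexivity).
  apply (is_RInt_scal (fun x => x ^ (j + m))), is_RInt_pow.
Qed.

Lemma is_RInt_ext_poly_sq (n : nat) : (2 <= n)%nat ->
  is_RInt (fun x => ext_poly n x ^ 2) 0 1 (ext_coef n 1 * ext_moment n 1).
Proof.
  intros Hn.
  apply (is_RInt_ext (fun x => rsum n (fun m => ext_coef n m * (x ^ m * ext_poly n x)))).
  { intros x _.
    rewrite (rsum_ext n _ (fun m => ext_poly n x * (ext_coef n m * x ^ m))) by (intros; ring).
    rewrite rsum_scal; unfold ext_poly; simpl; ring. }
  replace (ext_coef n 1 * ext_moment n 1) with (rsum n (fun m => ext_coef n m * ext_moment n m))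
    by (apply (rsum_single n 1 (fun m => ext_coef n m * ext_moment n m)); [lia | intros; rewrite ext_moment_vanish by lia; ring]).
  apply is_RInt_rsum; intros m _.
  apply (is_RInt_scal (fun x => x ^ m * ext_poly n x)), is_RInt_ext_moment.
Qed.

(** * Trigonometric polynomials built by Horner's scheme *)

Definition cis (x : R) : C := (cos x, sin x).

Lemma cis_add (x y : R) : cis (x + y) = (cis x * cis y)%C.
Proof. unfold cis, Cmult; simpl; rewrite cos_plus, sin_plus; f_equal; ring. Qed.

Lemma cis_0 : cis 0 = 1%C.
Proof. unfold cis; rewrite cos_0, sin_0; reflexivity. Qed.

Lemma Cmod_cis (x : R) : Cmod (cis x) = 1.
Proof.
  unfold Cmod, cis; simpl.
  replace (cos x * (cos x * 1) + sin x * (sin x * 1)) with 1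
    by (pose proof (sin2_cos2 x) as SC; unfold Rsqr in SC; lra).
  apply sqrt_1.
Qed.

Fixpoint csum (k : nat) (g : nat -> C) : C :=
  match k with O => 0%C | S k' => (csum k' g + g k')%C end.

Lemma csum_ext (k : nat) (g h : nat -> C) :
  (forall j, (j < k)%nat -> g j = h j) -> csum k g = csum k h.
Proof.
  revert g h; induction k as [|k IH]; intros g h E; simpl; auto.
  rewrite (IH g h) by (intros; apply E; lia); rewrite E by lia; reflexivity.
Qed.

Lemma csum_add (k : nat) (g h : nat -> C) :
  csum k (fun j => g j + h j)%C = (csum k g + csum k h)%C.
Proof. induction k as [|k IH]; simpl; [ring | rewrite IH; ring]. Qed.

Lemma csum_scal (k : nat) (c : C) (g : nat -> C) :
  csum k (fun j => c * g j)%C = (c * csum k g)%C.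
Proof. induction k as [|k IH]; simpl; [ring | rewrite IH; ring]. Qed.

Lemma csum_Sl (k : nat) (g : nat -> C) : csum (S k) g = (g O + csum k (fun j => g (S j)))%C.
Proof. revert g; induction k as [|k IH]; intros g; simpl in *; [ring | rewrite IH; ring]. Qed.

Lemma fst_csum (k : nat) (g : nat -> C) : fst (csum k g) = rsum k (fun j => fst (g j)).
Proof. induction k as [|k IH]; simpl; [reflexivity | rewrite IH; reflexivity]. Qed.

Lemma snd_csum (k : nat) (g : nat -> C) : snd (csum k g) = rsum k (fun j => snd (g j)).
Proof. induction k as [|k IH]; simpl; [reflexivity | rewrite IH; reflexivity]. Qed.

(* A coefficient sequence [q] supported in [0, L) stands for the trigonometric
   polynomial [t |-> sum_(j < L) q j e^(i d j t)]. *)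
Definition trig_eval (d : R) (L : nat) (q : nat -> C) (t : R) : C :=
  csum L (fun j => q j * cis (d * INR j * t))%C.

Definition coef_supp (q : nat -> C) (L : nat) : Prop := forall j, (L <= j)%nat -> q j = 0%C.

Definition coef_shift (q : nat -> C) (j : nat) : C :=
  match j with O => 0%C | S j' => q j' end.

Definition coef_addC (a : C) (q : nat -> C) (j : nat) : C :=
  match j with O => (q O + a)%C | S _ => q j end.

Definition inv_id (d : R) : C := (0, - / d).

(* [Ed d t = (e^(i d t) - 1) / (i d)]; it tends to [t] as [d -> 0]. *)
Definition Ed (d t : R) : C := (inv_id d * (cis (d * t) - 1))%C.

Definition coef_mulE (d : R) (q : nat -> C) (j : nat) : C :=
  (inv_id d * (coef_shift q j - q j))%C.

Fixpoint horner (dd : nat -> R) (r : nat) (t : R) : R :=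
  match r with O => 0 | S r' => dd r' + t * horner dd r' t end.

(* The coefficients of [horner dd r] evaluated at [Ed d t], computed by Horner's scheme. *)
Fixpoint horner_coef (d : R) (dd : nat -> R) (r : nat) : nat -> C :=
  match r with
  | O => fun _ => 0%C
  | S r' => coef_addC (RtoC (dd r')) (coef_mulE d (horner_coef d dd r'))
  end.

Definition horner_trig (d : R) (dd : nat -> R) (r : nat) (t : R) : C :=
  trig_eval d r (horner_coef d dd r) t.

Lemma coef_supp_horner (d : R) (dd : nat -> R) (r : nat) : coef_supp (horner_coef d dd r) r.
Proof.
  induction r as [|r IH]; intros j Hj; simpl; auto.
  destruct j as [|j]; [lia|]; unfold coef_addC, coef_mulE, coef_shift.
  rewrite !IH by lia; ring.
Qed.

Lemma trig_eval_supp (d : R) (L : nat) (q : nat -> C) (t : R) :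
  q L = 0%C -> trig_eval d (S L) q t = trig_eval d L q t.
Proof. intros H; unfold trig_eval; simpl; rewrite H; ring. Qed.

Lemma trig_eval_shift (d : R) (L : nat) (q : nat -> C) (t : R) :
  trig_eval d (S L) (coef_shift q) t = (cis (d * t) * trig_eval d L q t)%C.
Proof.
  unfold trig_eval; rewrite csum_Sl, <- csum_scal; simpl coef_shift.
  rewrite (csum_ext L _ (fun j => cis (d * t) * (q j * cis (d * INR j * t)))%C); [ring|].
  intros j _; rewrite S_INR.
  replace (d * (INR j + 1) * t) with (d * t + d * INR j * t) by ring.
  rewrite cis_add; ring.
Qed.

Lemma trig_eval_addC (d : R) (L : nat) (q : nat -> C) (a : C) (t : R) :
  trig_eval d (S L) (coef_addC a q) t = (trig_eval d (S L) q t + a)%C.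
Proof.
  unfold trig_eval; rewrite !csum_Sl; simpl coef_addC; simpl INR.
  rewrite Rmult_0_r, Rmult_0_l, cis_0; ring.
Qed.

Lemma trig_eval_mulE (d : R) (L : nat) (q : nat -> C) (t : R) : coef_supp q L ->
  trig_eval d (S L) (coef_mulE d q) t = (Ed d t * trig_eval d L q t)%C.
Proof.
  intros H; unfold Ed.
  transitivity (inv_id d * (trig_eval d (S L) (coef_shift q) t + (-1) * trig_eval d (S L) q t))%C.
  { unfold trig_eval, coef_mulE.
    rewrite <- (csum_scal (S L) (-1)%C), <- csum_add, <- csum_scal.
    apply csum_ext; intros; ring. }
  rewrite trig_eval_shift, trig_eval_supp by (apply H; lia); ring.
Qed.

Lemma horner_trig_S (d : R) (dd : nat -> R) (r : nat) (t : R) :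
  horner_trig d dd (S r) t = (RtoC (dd r) + Ed d t * horner_trig d dd r t)%C.
Proof.
  unfold horner_trig; simpl horner_coef.
  rewrite trig_eval_addC, trig_eval_mulE by apply coef_supp_horner; ring.
Qed.

(* The value at 0 and, up to the factor [i d], the derivative at 0 of the
   trigonometric polynomial with coefficients [q]. *)
Definition coef_sum (L : nat) (q : nat -> C) : C := csum L q.
Definition coef_wsum (L : nat) (q : nat -> C) : C := csum L (fun j => q j * RtoC (INR j))%C.

Lemma coef_sum_mulE (d : R) (L : nat) (q : nat -> C) : coef_supp q L ->
  coef_sum (S L) (coef_mulE d q) = 0%C.
Proof.
  intros H; unfold coef_sum, coef_mulE.
  rewrite (csum_ext _ _ (fun j => inv_id d * (coef_shift q j + (-1) * q j))%C) by (intros; ring).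
  rewrite csum_scal, csum_add, csum_scal, csum_Sl; simpl csum; rewrite (H L) by lia.
  simpl coef_shift; change (fun j => q j) with q; ring.
Qed.

Lemma coef_wsum_mulE (d : R) (L : nat) (q : nat -> C) : coef_supp q L ->
  coef_wsum (S L) (coef_mulE d q) = (inv_id d * coef_sum L q)%C.
Proof.
  intros H; unfold coef_sum, coef_wsum, coef_mulE.
  rewrite (csum_ext _ _ (fun j => inv_id d
      * (coef_shift q j * RtoC (INR j) + (-1) * (q j * RtoC (INR j))))%C) by (intros; ring).
  rewrite csum_scal, csum_add, csum_scal, csum_Sl; simpl csum at 2; rewrite (H L) by lia.
  simpl coef_shift.
  rewrite (csum_ext _ _ (fun j => q j * RtoC (INR j) + q j)%C).
  - rewrite csum_add; ring.
  - intros j _; rewrite S_INR; unfold RtoC, Cmult, Cplus; simpl; f_equal; ring.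
Qed.

Lemma coef_sum_addC (L : nat) (q : nat -> C) (a : C) :
  coef_sum (S L) (coef_addC a q) = (coef_sum (S L) q + a)%C.
Proof. unfold coef_sum; rewrite !csum_Sl; simpl coef_addC; ring. Qed.

Lemma coef_wsum_addC (L : nat) (q : nat -> C) (a : C) :
  coef_wsum (S L) (coef_addC a q) = coef_wsum (S L) q.
Proof.
  unfold coef_wsum; rewrite !csum_Sl; simpl coef_addC; simpl INR.
  unfold RtoC, Cmult, Cplus; simpl; f_equal; ring.
Qed.

Lemma coef_sum_horner (d : R) (dd : nat -> R) (r : nat) :
  coef_sum (S r) (horner_coef d dd (S r)) = RtoC (dd r).
Proof.
  simpl horner_coef; rewrite coef_sum_addC, coef_sum_mulE by apply coef_supp_horner; ring.
Qed.

Lemma coef_wsum_horner (d : R) (dd : nat -> R) (r : nat) :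
  coef_wsum (S (S r)) (horner_coef d dd (S (S r))) = (inv_id d * RtoC (dd r))%C.
Proof.
  change (horner_coef d dd (S (S r)))
    with (coef_addC (RtoC (dd (S r))) (coef_mulE d (horner_coef d dd (S r)))).
  rewrite coef_wsum_addC, coef_wsum_mulE by apply coef_supp_horner.
  rewrite coef_sum_horner; ring.
Qed.

(** * Approximation estimates *)

Lemma sin_ge_cubic (x : R) : 0 <= x <= 1 -> x - x ^ 3 / 6 <= sin x.
Proof.
  intros Hx; destruct (pre_sin_bound x 0) as [Lo _]; try lra.
  unfold sin_approx, sin_term in Lo; simpl in Lo.
  match type of Lo with ?u <= _ => replace u with (x - x ^ 3 / 6) in Lo by field end.
  exact Lo.
Qed.

Lemma cos_ge_quadratic (x : R) : 0 <= x <= 1 -> 1 - x ^ 2 / 2 <= cos x.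
Proof.
  intros Hx; destruct (pre_cos_bound x 0) as [Lo _]; try lra.
  unfold cos_approx, cos_term in Lo; simpl in Lo.
  match type of Lo with ?u <= _ => replace u with (1 - x ^ 2 / 2) in Lo by field end.
  exact Lo.
Qed.

Lemma sin_le_id (x : R) : 0 <= x -> sin x <= x.
Proof.
  intros Hx; destruct (Req_dec x 0) as [->|Hx0]; [rewrite sin_0; lra|].
  left; apply sin_lt_x; lra.
Qed.

Lemma Cmod_le_sq (z : C) (r : R) : 0 <= r -> fst z ^ 2 + snd z ^ 2 <= r ^ 2 -> Cmod z <= r.
Proof. intros Hr H; unfold Cmod; rewrite <- (sqrt_pow2 r) by exact Hr; apply sqrt_le_1_alt, H. Qed.

Lemma Ed_parts (d t : R) : 0 < d ->
  fst (Ed d t) = sin (d * t) / d /\ snd (Ed d t) = (1 - cos (d * t)) / d.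
Proof.
  intros Hd; unfold Ed, inv_id, cis, Cmult, Cminus, Cplus, Copp, RtoC; simpl.
  split; field; lra.
Qed.

Lemma Cmod_Ed_le (d t : R) : 0 < d <= 1 -> 0 <= t <= 1 -> Cmod (Ed d t) <= 1.
Proof.
  intros Hd Ht; destruct (Ed_parts d t ltac:(lra)) as [E1 E2].
  set (th := d * t) in *.
  assert (Hth : 0 <= th <= d) by (unfold th; split; nra).
  pose proof (sin_ge_cubic th ltac:(lra)); pose proof (sin_le_id th ltac:(lra)).
  pose proof (cos_ge_quadratic th ltac:(lra)); pose proof (COS_bound th).
  pose proof (sin2_cos2 th) as SC; unfold Rsqr in SC.
  apply Cmod_le_sq; [lra|]; rewrite E1, E2.
  replace ((sin th / d) ^ 2 + ((1 - cos th) / d) ^ 2)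
    with ((sin th * sin th + (1 - cos th) ^ 2) / d ^ 2) by (field; lra).
  assert (0 < d ^ 2) by (apply pow_lt; lra).
  apply (Rmult_le_reg_r (d ^ 2)); [lra|].
  unfold Rdiv; rewrite Rmult_assoc, Rinv_l by lra.
  assert (th * th <= d * d) by nra; nra.
Qed.

Lemma Cmod_Ed_sub_le (d t : R) : 0 < d <= 1 -> 0 <= t <= 1 -> Cmod (Ed d t - RtoC t)%C <= d.
Proof.
  intros Hd Ht; destruct (Ed_parts d t ltac:(lra)) as [E1 E2].
  set (th := d * t) in *.
  assert (Hth : 0 <= th <= d) by (unfold th; split; nra).
  pose proof (sin_ge_cubic th ltac:(lra)); pose proof (sin_le_id th ltac:(lra)).
  pose proof (cos_ge_quadratic th ltac:(lra)); pose proof (COS_bound th).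
  apply Cmod_le_sq; [lra|].
  replace (fst (Ed d t - RtoC t)%C) with ((sin th - th) / d)
    by (unfold Cminus, Cplus, Copp, RtoC; cbn [fst snd]; rewrite E1; unfold th; field; lra).
  replace (snd (Ed d t - RtoC t)%C) with ((1 - cos th) / d)
    by (unfold Cminus, Cplus, Copp, RtoC; cbn [fst snd]; rewrite E2; ring).
  replace (((sin th - th) / d) ^ 2 + ((1 - cos th) / d) ^ 2)
    with (((th - sin th) ^ 2 + (1 - cos th) ^ 2) / d ^ 2) by (field; lra).
  assert (0 < d ^ 2) by (apply pow_lt; lra).
  apply (Rmult_le_reg_r (d ^ 2)); [lra|].
  unfold Rdiv; rewrite Rmult_assoc, Rinv_l by lra.
  (* [(th - sin th)^2 + (1 - cos th)^2 <= th^4 / 36 + th^4 / 4 <= d^4] *)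
  assert ((th - sin th) ^ 2 <= (th ^ 3 / 6) ^ 2) by (apply pow_incr; lra).
  assert ((1 - cos th) ^ 2 <= (th ^ 2 / 2) ^ 2) by (apply pow_incr; lra).
  assert (0 <= th ^ 4) by (apply pow_le; lra).
  assert (th ^ 4 <= d ^ 4) by (apply pow_incr; lra).
  assert ((th ^ 3 / 6) ^ 2 <= th ^ 4 / 36).
  { replace ((th ^ 3 / 6) ^ 2) with (th ^ 4 * th ^ 2 / 36) by field.
    assert (th ^ 2 <= 1) by nra; nra. }
  replace ((th ^ 2 / 2) ^ 2) with (th ^ 4 / 4) in * by field.
  replace (d ^ 2 * d ^ 2) with (d ^ 4) by ring.
  lra.
Qed.

Definition abs_sum (dd : nat -> R) (r : nat) : R := rsum r (fun i => Rabs (dd i)).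

Lemma abs_sum_ge0 (dd : nat -> R) (r : nat) : 0 <= abs_sum dd r.
Proof.
  unfold abs_sum; induction r as [|r IH]; simpl; [lra|].
  pose proof (Rabs_pos (dd r)); lra.
Qed.

Lemma abs_sum_S (dd : nat -> R) (r : nat) : abs_sum dd r <= abs_sum dd (S r).
Proof. unfold abs_sum; simpl; pose proof (Rabs_pos (dd r)); lra. Qed.

Lemma horner_bound (dd : nat -> R) (r : nat) (t : R) : 0 <= t <= 1 ->
  Rabs (horner dd r t) <= abs_sum dd r.
Proof.
  intros Ht; induction r as [|r IH]; simpl.
  - rewrite Rabs_R0; unfold abs_sum; simpl; lra.
  - unfold abs_sum in *; simpl rsum.
    eapply Rle_trans; [apply Rabs_triang|]; rewrite Rabs_mult.
    assert (Rabs t <= 1) by (rewrite Rabs_pos_eq; lra).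
    pose proof (Rabs_pos (horner dd r t)); pose proof (Rabs_pos t); nra.
Qed.

Lemma horner_sum (dd : nat -> R) (r : nat) (t : R) :
  horner dd r t = rsum r (fun j => dd (r - 1 - j)%nat * t ^ j).
Proof.
  induction r as [|r IH]; [reflexivity|].
  rewrite rsum_Sl; simpl horner; rewrite IH, <- rsum_scal.
  replace (S r - 1 - 0)%nat with r by lia; simpl pow at 1.
  f_equal; [ring|]; apply rsum_ext; intros j Hj.
  replace (S r - 1 - S j)%nat with (r - 1 - j)%nat by lia; simpl pow; ring.
Qed.

(* Each Horner step introduces an error [|Ed d t - t| * |horner| <= d * abs_sum]
   and, since [|Ed d t| <= 1], does not amplify the previous ones. *)
Lemma horner_trig_close (d : R) (dd : nat -> R) (r : nat) (t : R) :
  0 < d <= 1 -> 0 <= t <= 1 ->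
  Cmod (horner_trig d dd r t - RtoC (horner dd r t))%C <= d * INR r * abs_sum dd r.
Proof.
  intros Hd Ht.
  pose proof (Cmod_Ed_le d t Hd Ht) as E1; pose proof (Cmod_Ed_sub_le d t Hd Ht) as E2.
  induction r as [|r IH].
  - simpl; replace (horner_trig d dd 0 t - RtoC 0)%C with (RtoC 0)
      by (unfold RtoC, Cminus, Cplus, Copp; simpl; f_equal; ring).
    rewrite Cmod_R, Rabs_R0; lra.
  - rewrite horner_trig_S; simpl horner.
    replace (RtoC (dd r) + Ed d t * horner_trig d dd r t - RtoC (dd r + t * horner dd r t))%C
      with (Ed d t * (horner_trig d dd r t - RtoC (horner dd r t))
            + (Ed d t - RtoC t) * RtoC (horner dd r t))%C
      by (rewrite RtoC_plus, RtoC_mult; ring).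
    eapply Rle_trans; [apply Cmod_triangle|]; rewrite !Cmod_mult, Cmod_R.
    pose proof (horner_bound dd r t Ht).
    pose proof (Cmod_ge_0 (horner_trig d dd r t - RtoC (horner dd r t))%C).
    pose proof (Cmod_ge_0 (Ed d t)); pose proof (Cmod_ge_0 (Ed d t - RtoC t)%C).
    pose proof (Rabs_pos (horner dd r t)); pose proof (abs_sum_ge0 dd r).
    pose proof (abs_sum_S dd r); rewrite S_INR; pose proof (pos_INR r).
    assert (Cmod (Ed d t) * Cmod (horner_trig d dd r t - RtoC (horner dd r t))
            <= d * INR r * abs_sum dd r) by nra.
    assert (Cmod (Ed d t - RtoC t) * Rabs (horner dd r t) <= d * abs_sum dd r) by nra.
    assert (d * (INR r + 1) * abs_sum dd r <= d * (INR r + 1) * abs_sum dd (S r))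
      by (apply Rmult_le_compat_l; nra).
    nra.
Qed.

Lemma fRe_csum (n : nat) (a b lam : nat -> R) (t : R) :
  fRe n a b lam t = fst (csum n (fun j => (a j, b j) * cis (lam j * t))%C).
Proof. rewrite fst_csum; apply rsum_ext; intros; simpl; ring. Qed.

Lemma fIm_csum (n : nat) (a b lam : nat -> R) (t : R) :
  fIm n a b lam t = snd (csum n (fun j => (a j, b j) * cis (lam j * t))%C).
Proof. rewrite snd_csum; apply rsum_ext; intros; simpl; ring. Qed.

Lemma is_derive_rsum (k : nat) (g : nat -> R -> R) (dg : nat -> R) (x : R) :
  (forall j, is_derive (g j) x (dg j)) ->
  is_derive (fun t => rsum k (fun j => g j t)) x (rsum k dg).
Proof.
  induction k as [|k IH]; intros H; simpl.
  - apply (is_derive_const (K := R_AbsRing) (V := R_NormedModule) 0).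
  - apply (is_derive_plus (fun t => rsum k (fun j => g j t)) (g k)); auto.
Qed.

Lemma is_derive_fRe (n : nat) (a b lam : nat -> R) (x : R) : is_derive (fRe n a b lam) x
  (rsum n (fun j => - a j * lam j * sin (lam j * x) - b j * lam j * cos (lam j * x))).
Proof.
  apply (is_derive_rsum n (fun j t => a j * cos (lam j * t) - b j * sin (lam j * t))).
  intros j; auto_derive; [auto | ring].
Qed.

Lemma is_derive_fIm (n : nat) (a b lam : nat -> R) (x : R) : is_derive (fIm n a b lam) x
  (rsum n (fun j => a j * lam j * cos (lam j * x) - b j * lam j * sin (lam j * x))).
Proof.
  apply (is_derive_rsum n (fun j t => a j * sin (lam j * t) + b j * cos (lam j * t))).
  intros j; auto_derive; [auto | ring].
Qed.

Lemma fRe_derive0 (n : nat) (a b lam : nat -> R) :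
  derivable_pt_lim (fRe n a b lam) 0 (- rsum n (fun j => b j * lam j)).
Proof.
  apply is_derive_Reals.
  replace (- rsum n (fun j => b j * lam j)) with
    (rsum n (fun j => - a j * lam j * sin (lam j * 0) - b j * lam j * cos (lam j * 0))).
  - apply is_derive_fRe.
  - replace (- rsum n (fun j => b j * lam j)) with (-1 * rsum n (fun j => b j * lam j)) by ring.
    rewrite <- rsum_scal; apply rsum_ext; intros; rewrite Rmult_0_r, sin_0, cos_0; ring.
Qed.

Lemma fIm_derive0 (n : nat) (a b lam : nat -> R) :
  derivable_pt_lim (fIm n a b lam) 0 (rsum n (fun j => a j * lam j)).
Proof.
  apply is_derive_Reals.
  replace (rsum n (fun j => a j * lam j)) with
    (rsum n (fun j => a j * lam j * cos (lam j * 0) - b j * lam j * sin (lam j * 0))).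
  - apply is_derive_fIm.
  - apply rsum_ext; intros; rewrite Rmult_0_r, sin_0, cos_0; ring.
Qed.

Lemma fAbs2_continuous (n : nat) (a b lam : nat -> R) (x : R) :
  continuity_pt (fAbs2 n a b lam) x.
Proof.
  apply derivable_continuous_pt; eexists; apply is_derive_Reals.
  apply (is_derive_plus (fun t => fRe n a b lam t ^ 2) (fun t => fIm n a b lam t ^ 2));
    apply is_derive_pow; [apply is_derive_fRe | apply is_derive_fIm].
Qed.

Lemma exists_nonzero_of_derive (f : R -> R) (x l : R) :
  derivable_pt_lim f x l -> l <> 0 -> exists t, f t <> 0.
Proof.
  intros Hf Hl; apply NNPP; intros Hno.
  apply Hl, (uniqueness_limite f x); [exact Hf|].
  apply is_derive_Reals, (is_derive_ext (fun _ => 0)); [|apply (is_derive_const (K := R_AbsRing) (V := R_NormedModule))].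
  intros t; destruct (Req_dec (f t) 0) as [->|Ht]; [reflexivity|].
  exfalso; apply Hno; exists t; exact Ht.
Qed.

Definition ratio_exceeds (n : nat) (eta c : R) : Prop :=
  exists (lam a b : nat -> R),
    freqs_ok n eta lam /\
    (exists t : R, fRe n a b lam t <> 0 \/ fIm n a b lam t <> 0) /\
    exists (pr : Riemann_integrable (fAbs2 n a b lam) 0 1) (dRe dIm : R),
      derivable_pt_lim (fRe n a b lam) 0 dRe /\
      derivable_pt_lim (fIm n a b lam) 0 dIm /\
      c * sqrt (RiemannInt pr) < sqrt (dRe ^ 2 + dIm ^ 2).

Lemma ratio_exceeds_intro (n : nat) (eta c : R) (lam a b : nat -> R) (dRe dIm : R) :
  freqs_ok n eta lam ->
  derivable_pt_lim (fRe n a b lam) 0 dRe ->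
  derivable_pt_lim (fIm n a b lam) 0 dIm ->
  dRe <> 0 \/ dIm <> 0 ->
  (forall pr : Riemann_integrable (fAbs2 n a b lam) 0 1,
     c * sqrt (RiemannInt pr) < sqrt (dRe ^ 2 + dIm ^ 2)) ->
  ratio_exceeds n eta c.
Proof.
  intros Hlam DRe DIm Hd Hc.
  assert (pr : Riemann_integrable (fAbs2 n a b lam) 0 1)
    by (apply continuity_implies_RiemannInt; [lra | intros; apply fAbs2_continuous]).
  exists lam, a, b; split; [exact Hlam|]; split.
  - destruct Hd as [Hd | Hd];
      [destruct (exists_nonzero_of_derive _ _ _ DRe Hd) as [t Ht]
      | destruct (exists_nonzero_of_derive _ _ _ DIm Hd) as [t Ht]]; eauto.
  - exists pr, dRe, dIm; auto.
Qed.

Definition ext_rev (n r : nat) : R := ext_coef n (n - 1 - r).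

Lemma horner_ext_rev (n : nat) (t : R) : horner (ext_rev n) n t = ext_poly n t.
Proof.
  rewrite horner_sum; apply rsum_ext; intros j Hj; unfold ext_rev.
  replace (n - 1 - (n - 1 - j))%nat with j by lia; reflexivity.
Qed.

(** * The witness *)

(* The witness [f(t) = e^(i d t) * p(Ed d t)] with frequencies [d, 2d, ..., nd]. *)
Definition wit_coef (n : nat) (d : R) : nat -> C := horner_coef d (ext_rev n) n.
Definition wit_re (n : nat) (d : R) (j : nat) : R := fst (wit_coef n d j).
Definition wit_im (n : nat) (d : R) (j : nat) : R := snd (wit_coef n d j).
Definition wit_freq (d : R) (j : nat) : R := d * (INR j + 1).

Definition approx_const (n : nat) : R :=
  let A := abs_sum (ext_rev n) n in 2 * A * (INR n * A) + (INR n * A) ^ 2.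

Lemma freqs_ok_wit (n : nat) (eta d : R) : 0 < d -> d * INR n < eta ->
  freqs_ok n eta (wit_freq d).
Proof.
  intros Hd Heta; unfold wit_freq; split.
  - intros j Hj; pose proof (pos_INR j).
    assert (INR j + 1 <= INR n) by (rewrite <- S_INR; apply le_INR; lia).
    split; nra.
  - intros j Hj; rewrite S_INR; lra.
Qed.

Lemma fAbs2_wit (n : nat) (d t : R) :
  fAbs2 n (wit_re n d) (wit_im n d) (wit_freq d) t = Cmod (horner_trig d (ext_rev n) n t) ^ 2.
Proof.
  unfold fAbs2; rewrite fRe_csum, fIm_csum.
  replace (csum n (fun j => (wit_re n d j, wit_im n d j) * cis (wit_freq d j * t))%C)
    with (trig_eval d (S n) (coef_shift (wit_coef n d)) t).
  2:{ unfold trig_eval; rewrite csum_Sl; simpl coef_shift.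
      rewrite Cmult_0_l, Cplus_0_l; apply csum_ext; intros j _.
      unfold wit_re, wit_im, wit_freq; rewrite <- surjective_pairing, S_INR; f_equal; f_equal; ring. }
  rewrite trig_eval_shift.
  replace (Cmod (horner_trig d (ext_rev n) n t))
    with (Cmod (cis (d * t) * trig_eval d n (wit_coef n d) t)%C)
    by (rewrite Cmod_mult, Cmod_cis; unfold horner_trig, wit_coef; ring).
  unfold Cmod; rewrite pow2_sqrt; [reflexivity|].
  pose proof (pow2_ge_0 (fst (cis (d * t) * trig_eval d n (wit_coef n d) t)%C)).
  pose proof (pow2_ge_0 (snd (cis (d * t) * trig_eval d n (wit_coef n d) t)%C)).
  lra.
Qed.

Lemma fAbs2_wit_le (n : nat) (d t : R) : 0 < d <= 1 -> 0 <= t <= 1 ->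
  fAbs2 n (wit_re n d) (wit_im n d) (wit_freq d) t <= ext_poly n t ^ 2 + d * approx_const n.
Proof.
  intros Hd Ht; rewrite fAbs2_wit.
  set (h := horner_trig d (ext_rev n) n t).
  set (A := abs_sum (ext_rev n) n).
  assert (HA : 0 <= A) by apply abs_sum_ge0.
  pose proof (horner_trig_close d (ext_rev n) n t Hd Ht) as Close.
  pose proof (horner_bound (ext_rev n) n t Ht) as Bound.
  rewrite horner_ext_rev in Close, Bound; fold h A in Close, Bound.
  assert (Hh : Cmod h <= Rabs (ext_poly n t) + d * (INR n * A)).
  { replace h with (RtoC (ext_poly n t) + (h - RtoC (ext_poly n t)))%C by ring.
    eapply Rle_trans; [apply Cmod_triangle|]; rewrite Cmod_R; lra. }
  assert (HM : 0 <= INR n * A) by (pose proof (pos_INR n); nra).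
  pose proof (Cmod_ge_0 h); pose proof (Rabs_pos (ext_poly n t)).
  assert (Cmod h ^ 2 <= (Rabs (ext_poly n t) + d * (INR n * A)) ^ 2) by (apply pow_incr; lra).
  rewrite <- (pow2_abs (ext_poly n t)); unfold approx_const; fold A.
  assert (d * d * (INR n * A) ^ 2 <= d * (INR n * A) ^ 2)
    by (pose proof (pow2_ge_0 (INR n * A)); nra).
  assert (Rabs (ext_poly n t) * d * (INR n * A) <= A * d * (INR n * A))
    by (apply Rmult_le_compat_r; [exact HM | apply Rmult_le_compat_r; lra]).
  nra.
Qed.

Lemma RiemannInt_wit_le (n : nat) (d : R) (pr : Riemann_integrable
    (fAbs2 n (wit_re n d) (wit_im n d) (wit_freq d)) 0 1) :
  (2 <= n)%nat -> 0 < d <= 1 ->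
  RiemannInt pr <= ext_coef n 1 * ext_moment n 1 + d * approx_const n.
Proof.
  intros Hn Hd; rewrite <- RInt_Reals.
  assert (HI : is_RInt (fun x => ext_poly n x ^ 2 + d * approx_const n) 0 1
                 (ext_coef n 1 * ext_moment n 1 + d * approx_const n)).
  { apply (is_RInt_plus (fun x => ext_poly n x ^ 2) (fun _ => d * approx_const n));
      [apply is_RInt_ext_poly_sq, Hn|].
    assert (H0 := is_RInt_const (V := R_NormedModule) 0 1 (d * approx_const n)).
    replace (scal (1 - 0) (d * approx_const n : R_NormedModule)) with (d * approx_const n) in H0
      by (unfold scal; simpl; unfold mult; simpl; ring).
    exact H0. }
  rewrite <- (is_RInt_unique _ _ _ _ HI).
  apply RInt_le; [lra | apply ex_RInt_Reals_1, pr | eexists; exact HI |].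
  intros x Hx; apply fAbs2_wit_le; lra.
Qed.

(* [f'(0) = i d sum_j (j + 1) wit_coef n d j = p'(0) + i d p(0)]: its real part is [ext_coef n 1]. *)
Lemma wit_derive_re (n : nat) (d : R) : (2 <= n)%nat -> 0 < d ->
  - rsum n (fun j => wit_im n d j * wit_freq d j) = ext_coef n 1.
Proof.
  intros Hn Hd.
  assert (E : rsum n (fun j => wit_im n d j * wit_freq d j)
              = snd (RtoC d * (coef_wsum n (wit_coef n d) + coef_sum n (wit_coef n d)))%C).
  { unfold coef_wsum, coef_sum; rewrite <- csum_add, <- csum_scal, snd_csum.
    apply rsum_ext; intros j _; unfold wit_im, wit_freq.
    destruct (wit_coef n d j); unfold RtoC, Cmult, Cplus; simpl; ring. }
  rewrite E; destruct n as [|[|m]]; try lia.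
  unfold wit_coef; rewrite coef_wsum_horner.
  rewrite coef_sum_horner; unfold ext_rev.
  replace (S (S m) - 1 - m)%nat with 1%nat by lia.
  unfold inv_id, RtoC, Cmult, Cplus; simpl; field; lra.
Qed.

Lemma sqrt_mul_lt_perturb (c S P K : R) : 0 < S -> 0 < P -> 0 <= K -> c < sqrt S ->
  exists d0, 0 < d0 /\
    forall d I, 0 <= d <= d0 -> I <= P + d * K -> c * sqrt I < sqrt (S * P).
Proof.
  intros HS HP HK Hc.
  assert (HSP : 0 < sqrt (S * P)) by (apply sqrt_lt_R0; nra).
  destruct (Rle_lt_dec c 0) as [Hc0 | Hc0].
  - exists 1; split; [lra|]; intros d I _ _.
    pose proof (sqrt_pos I); nra.
  - assert (Hc2 : c ^ 2 < S).
    { rewrite <- (pow2_sqrt S) by lra; pose proof (sqrt_pos S); nra. }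
    assert (HcK : 0 < c ^ 2 * K + 1) by (pose proof (pow2_ge_0 c); nra).
    exists ((S - c ^ 2) * P / (2 * (c ^ 2 * K + 1))); split;
      [apply Rdiv_lt_0_compat; nra|].
    intros d I Hd HI.
    assert (Hd' : (c ^ 2 * K + 1) * d * 2 <= (S - c ^ 2) * P).
    { destruct Hd as [_ Hd]; apply (Rmult_le_compat_l (2 * (c ^ 2 * K + 1))) in Hd; [|lra].
      replace (2 * (c ^ 2 * K + 1) * ((S - c ^ 2) * P / (2 * (c ^ 2 * K + 1))))
        with ((S - c ^ 2) * P) in Hd by (field; lra).
      lra. }
    assert (Hlt : c ^ 2 * (P + d * K) < S * P) by (pose proof (pow2_ge_0 c); nra).
    apply Rle_lt_trans with (sqrt (c ^ 2 * (P + d * K))).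
    + rewrite sqrt_mult_alt, sqrt_pow2 by (try apply pow2_ge_0; lra).
      apply Rmult_le_compat_l; [lra | apply sqrt_le_1_alt, HI].
    + apply sqrt_lt_1_alt; split; [|exact Hlt].
      apply Rmult_le_pos; [apply pow2_ge_0 | nra].
Qed.

Lemma ratio_exceeds_ge2 (n : nat) (eta c : R) : (2 <= n)%nat -> 0 < eta ->
  c < sqrt (eps_sum n) -> ratio_exceeds n eta c.
Proof.
  intros Hn Heta Hc.
  pose proof (eps_sum_pos n Hn) as HS; pose proof (ext_moment_1_neg n Hn) as HG.
  set (P := ext_coef n 1 * ext_moment n 1).
  assert (HP : P = eps_sum n * ext_moment n 1 ^ 2) by (unfold P; rewrite ext_coef_1 by exact Hn; ring).
  assert (HP0 : 0 < P) by (rewrite HP; apply Rmult_lt_0_compat; [exact HS | apply pow2_gt_0; lra]).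
  assert (HK : 0 <= approx_const n).
  { unfold approx_const; pose proof (abs_sum_ge0 (ext_rev n) n); pose proof (pos_INR n).
    pose proof (pow2_ge_0 (INR n * abs_sum (ext_rev n) n)); nra. }
  destruct (sqrt_mul_lt_perturb c (eps_sum n) P (approx_const n) HS HP0 HK Hc) as (d0 & Hd0 & Hlt).
  assert (Hn0 : 0 < INR n) by (apply lt_0_INR; lia).
  set (d := Rmin d0 (Rmin 1 (eta / (2 * INR n)))).
  assert (Hd : 0 < d <= 1 /\ d <= d0 /\ d <= eta / (2 * INR n)).
  { unfold d; pose proof (Rdiv_lt_0_compat eta (2 * INR n) Heta ltac:(lra)).
    repeat split; try apply Rmin_glb_lt; try apply Rmin_glb_lt; try lra;
      eauto using Rmin_l, Rmin_r, Rle_trans. }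
  assert (Hdn : d * INR n < eta).
  { destruct Hd as (_ & _ & Hd); apply (Rmult_le_compat_r (INR n)) in Hd; [|lra].
    replace (eta / (2 * INR n) * INR n) with (eta / 2) in Hd by (field; lra); lra. }
  pose proof (wit_derive_re n d Hn ltac:(lra)) as HRe.
  apply (ratio_exceeds_intro n eta c (wit_freq d) (wit_re n d) (wit_im n d) (ext_coef n 1)
           (rsum n (fun j => wit_re n d j * wit_freq d j))).
  - apply freqs_ok_wit; lra.
  - rewrite <- HRe; apply fRe_derive0.
  - apply fIm_derive0.
  - left; rewrite ext_coef_1 by exact Hn; nra.
  - intros pr; eapply Rlt_le_trans.
    + apply (Hlt d); [lra | apply RiemannInt_wit_le; [exact Hn | lra]].
    + apply sqrt_le_1_alt.
      replace (eps_sum n * P) with (ext_coef n 1 ^ 2) by (rewrite HP, ext_coef_1 by exact Hn; ring).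
      pose proof (pow2_ge_0 (rsum n (fun j => wit_re n d j * wit_freq d j))); lra.
Qed.

Lemma ratio_exceeds_1 (eta c : R) : 0 < eta -> c < 0 -> ratio_exceeds 1 eta c.
Proof.
  intros Heta Hc.
  apply (ratio_exceeds_intro 1 eta c (fun _ => eta / 2) (fun _ => 1) (fun _ => 0)
           (- rsum 1 (fun _ => 0 * (eta / 2))) (rsum 1 (fun _ => 1 * (eta / 2)))).
  - split; [intros; lra | intros; lia].
  - apply fRe_derive0.
  - apply fIm_derive0.
  - right; simpl; lra.
  - intros pr; pose proof (sqrt_pos (RiemannInt pr)).
    enough (0 < sqrt ((- rsum 1 (fun _ => 0 * (eta / 2))) ^ 2 + rsum 1 (fun _ => 1 * (eta / 2)) ^ 2))
      by nra.
    apply sqrt_lt_R0; simpl; nra.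
Qed.

Lemma eps_n_bound (n : nat) : (1 <= n)%nat ->
  (1 + eps_n n) * / sqrt 3 * INR n ^ 3 = sqrt (eps_sum n).
Proof.
  intros Hn; unfold eps_n, eps_sum.
  assert (0 < sqrt 3) by (apply sqrt_lt_R0; lra).
  assert (0 < INR n) by (apply lt_0_INR; lia).
  field; split; lra.
Qed.

Theorem theorem5p3 :
  forall (n : nat) (eta : R), (1 <= n)%nat -> 0 < eta ->
  forall c : R, c < (1 + eps_n n) * / sqrt 3 * INR n ^ 3 ->
  exists (lam a b : nat -> R),
    freqs_ok n eta lam /\
    (exists t : R, fRe n a b lam t <> 0 \/ fIm n a b lam t <> 0) /\
    exists (pr : Riemann_integrable (fAbs2 n a b lam) 0 1) (dRe dIm : R),
      derivable_pt_lim (fRe n a b lam) 0 dRe /\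
      derivable_pt_lim (fIm n a b lam) 0 dIm /\
      c * sqrt (RiemannInt pr) < sqrt (dRe ^ 2 + dIm ^ 2).
Proof.
  intros n eta Hn Heta c Hc.
  rewrite eps_n_bound in Hc by exact Hn.
  destruct (Compare_dec.le_lt_dec 2 n) as [H2 | H1].
  - exact (ratio_exceeds_ge2 n eta c H2 Heta Hc).
  - replace n with 1%nat in * by lia.
    replace (eps_sum 1) with 0 in Hc by (unfold eps_sum; simpl; ring).
    rewrite sqrt_0 in Hc.
    exact (ratio_exceeds_1 eta c Heta Hc).
Qed.
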